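(* Let $V$ be a real finite-dimensional inner product space and let $(g(x))_{x\ge0}$ be a semigroup on $V$ satisfying the boundedness assumption. Let $V=V_1\oplus V_2$ be a decomposition into $g$-invariant subspaces with $g(x)|_{V_1}$ invertible for all $x\ge0$ and $g(x)|_{V_2}=0$ for all $x>0$. Then $V_1\perp V_2$.
   Context: A semigroup is a map $g:[0,\infty)\to L(V)$ with $g(0)=\mathrm{id}$ and $g(x+y)=g(x)g(y)$ for all $x,y\ge0$. Boundedness assumption: there is a locally bounded function $f:[0,\infty)\to\mathbb R$, right-continuous at $0$, with $f(0)=1$, such that $\|g(x)\|_{\mathrm{op}}\le f(x)$ for all $x\ge0$, where $\|\cdot\|_{\mathrm{op}}$ is the operator norm induced by the inner product. *)

From HB Require Import structures.
From mathcomp Require Import all_boot all_order all_algebra.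
From mathcomp Require Import all_classical all_reals all_analysis.
Set Implicit Arguments. Unset Strict Implicit. Unset Printing Implicit Defensive.
Import Order.TTheory GRing.Theory Num.Theory numFieldNormedType.Exports.
Local Open Scope ring_scope.
Local Open Scope classical_set_scope.

(* V is modelled as the real vector space 'rV[R]_n (n = dim V) equipped with an
   ARBITRARY inner product ip; linear operators on V are matrices A : 'M_n
   acting by v |-> v *m A; subspaces are row spaces of matrices (mxalgebra). *)

Definition is_inner_product (R : realType) (n : nat)
  (ip : 'rV[R]_n -> 'rV[R]_n -> R) : Prop :=
  [/\ (forall u v, ip u v = ip v u),
      (forall a u v w, ip (a *: u + v) w = a * ip u w + ip v w),
      (forall v, 0 <= ip v v) &
      (forall v, ip v v = 0 -> v = 0)].

Definition ipnorm (R : realType) (n : nat) (ip : 'rV[R]_n -> 'rV[R]_n -> R)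
  (v : 'rV[R]_n) : R := Num.sqrt (ip v v).

Definition opnorm (R : realType) (n : nat) (ip : 'rV[R]_n -> 'rV[R]_n -> R)
  (A : 'M[R]_n) : R :=
  sup [set ipnorm ip (v *m A) | v in [set v : 'rV[R]_n | ipnorm ip v <= 1]].

Definition is_semigroup (R : realType) (n : nat) (g : R -> 'M[R]_n) : Prop :=
  g 0 = 1%:M /\ (forall x y, 0 <= x -> 0 <= y -> g (x + y) = g x *m g y).

Definition locally_bounded0 (R : realType) (f : R -> R) : Prop :=
  forall b, 0 <= b -> exists M : R, forall x, 0 <= x <= b -> `|f x| <= M.

Definition boundedness_assumption (R : realType) (n : nat)
  (ip : 'rV[R]_n -> 'rV[R]_n -> R) (g : R -> 'M[R]_n) : Prop :=
  exists f : R -> R,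
    [/\ locally_bounded0 f,
        f x @[x --> 0^'+] --> f 0,
        f 0 = 1 &
        forall x, 0 <= x -> opnorm ip (g x) <= f x].

From HB Require Import structures.
From mathcomp Require Import all_boot all_order all_algebra.
From mathcomp Require Import all_classical all_reals all_analysis.
From mathcomp Require Import ring lra.
Import Order.TTheory GRing.Theory Num.Theory numFieldNormedType.Exports.
Local Open Scope ring_scope.
Set Implicit Arguments. Unset Strict Implicit. Unset Printing Implicit Defensive.

(* Let v be in V1 and w in V2.  We show that v has minimal norm on the line
   v + R w, which forces <v, w> = 0.  For h > 0 the operator g(h) kills w, so
   (v + t w) g(h) = v g(h) and |v g(h)| <= f(h) |v + t w| with f(h) close to 1
   for small h; it remains to find small h with v g(h) close to v.  No
   continuity of g is assumed: writing v = z g(b) (g(b) maps V1 onto V1), the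
   bounded sequence y_j = z g(s_j), s_j = b/(j+2), has two close terms
   y_j0, y_j1 with j0 < j1, and v g(h) - v = (y_j0 - y_j1) g(b - s_j1) for
   h = s_j0 - s_j1. *)

Section InnerProductGeometry.
Variables (R : realType) (n : nat) (ip : 'rV[R]_n -> 'rV[R]_n -> R).
Hypothesis ipP : is_inner_product ip.

Lemma ipC u v : ip u v = ip v u.
Proof. by case: ipP. Qed.

Lemma ipDl u v w : ip (u + v) w = ip u w + ip v w.
Proof. by case: ipP => _ lin _ _; have := lin 1 u v w; rewrite scale1r mul1r. Qed.

Lemma ip0l w : ip 0 w = 0.
Proof. by apply: (@addrI _ (ip 0 w)); rewrite -ipDl !addr0. Qed.

Lemma ipZl a u w : ip (a *: u) w = a * ip u w.
Proof. by case: ipP => _ lin _ _; have := lin a u 0 w; rewrite !addr0 ip0l addr0. Qed.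

Lemma ipNl u w : ip (- u) w = - ip u w.
Proof. by rewrite -scaleN1r ipZl mulN1r. Qed.

Lemma ipDr u v w : ip w (u + v) = ip w u + ip w v.
Proof. by rewrite !(ipC w) ipDl. Qed.

Lemma ipZr a u w : ip w (a *: u) = a * ip w u.
Proof. by rewrite !(ipC w) ipZl. Qed.

Lemma ipNr u w : ip w (- u) = - ip w u.
Proof. by rewrite !(ipC w) ipNl. Qed.

Lemma ip_suml (I : finType) (F : I -> 'rV[R]_n) w :
  ip (\sum_i F i) w = \sum_i ip (F i) w.
Proof. exact: (big_morph (ip^~ w) (fun u v => ipDl u v w) (ip0l w)). Qed.

Lemma ip_sumr (I : finType) (F : I -> 'rV[R]_n) w :
  ip w (\sum_i F i) = \sum_i ip w (F i).
Proof. by rewrite ipC ip_suml; apply: eq_bigr => i _; rewrite ipC. Qed.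

Lemma ip_expand_l u w : ip u w = \sum_k u 0 k * ip 'e_k w.
Proof.
by rewrite {1}(row_sum_delta u) ip_suml; apply: eq_bigr => k _; rewrite ipZl.
Qed.

Lemma ip_expand_r u w : ip w u = \sum_k u 0 k * ip w 'e_k.
Proof. by rewrite ipC ip_expand_l; apply: eq_bigr => k _; rewrite ipC. Qed.

Lemma ip_CauchySchwarz u v : ip u v ^+ 2 <= ip u u * ip v v.
Proof.
have [_ _ ge0 def] := ipP.
have [v0|vn0] := eqVneq (ip v v) 0.
  by rewrite (def _ v0) ipC !ip0l expr0n /= mulr0.
have vp : 0 < ip v v by rewrite lt_def vn0 ge0.
(* expand 0 <= |u - t v|^2 at the optimal t *)
have := ge0 (u - (ip u v / ip v v) *: v).
rewrite ipDl !ipDr ipNl !ipNr !ipZl !ipZr ipNl ipZl (ipC v u) => H.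
rewrite -(@ler_pM2r _ (ip v v)^-1) ?invr_gt0 // mulrK ?unitf_gt0 //.
rewrite -subr_ge0; apply: le_trans H _; rewrite le_eqVlt; apply/orP; left.
by apply/eqP; field.
Qed.

Lemma ipnorm_ge0 u : 0 <= ipnorm ip u.
Proof. exact: sqrtr_ge0. Qed.

Lemma ipnorm_sq u : ipnorm ip u ^+ 2 = ip u u.
Proof. by case: ipP => _ _ ge0 _; rewrite sqr_sqrtr. Qed.

Lemma ipnorm_eq0 u : ipnorm ip u = 0 -> u = 0.
Proof. by case: ipP => _ _ _ def H; apply: def; rewrite -ipnorm_sq H expr0n. Qed.

Lemma ipnorm0 : ipnorm ip 0 = 0.
Proof. by rewrite /ipnorm ip0l sqrtr0. Qed.

Lemma ipnormZ a u : ipnorm ip (a *: u) = `|a| * ipnorm ip u.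
Proof.
by rewrite /ipnorm ipZl ipZr mulrA -expr2 sqrtrM ?sqr_ge0 // sqrtr_sqr.
Qed.

Lemma ipnormN u : ipnorm ip (- u) = ipnorm ip u.
Proof. by rewrite -scaleN1r ipnormZ normrN normr1 mul1r. Qed.

Lemma ip_norm_le u v : `|ip u v| <= ipnorm ip u * ipnorm ip v.
Proof.
rewrite -(@ler_pXn2r _ 2) ?nnegrE ?mulr_ge0 ?ipnorm_ge0 //.
by rewrite exprMn !ipnorm_sq real_normK ?num_real // ip_CauchySchwarz.
Qed.

Lemma ipnormD u v : ipnorm ip (u + v) <= ipnorm ip u + ipnorm ip v.
Proof.
rewrite -(@ler_pXn2r _ 2) ?nnegrE ?addr_ge0 ?ipnorm_ge0 //.
rewrite ipnorm_sq ipDl !ipDr (ipC v u) sqrrD !ipnorm_sq.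
have := ip_norm_le u v; have := ler_norm (ip u v); lra.
Qed.

Lemma ipnorm_sum (I : finType) (F : I -> 'rV[R]_n) :
  ipnorm ip (\sum_i F i) <= \sum_i ipnorm ip (F i).
Proof.
elim/big_ind2: _ => // [|x1 y1 x2 y2 H1 H2]; first by rewrite ipnorm0.
exact: le_trans (ipnormD _ _) (lerD H1 H2).
Qed.

Lemma ler_sum_term (I : finType) (F : I -> R) k :
  (forall i, 0 <= F i) -> F k <= \sum_i F i.
Proof. by move=> F0; rewrite (bigD1 k) //= lerDl sumr_ge0. Qed.

(* Norm equivalence, first half: coordinates are bounded by the norm.  The
   coordinate functionals are represented through the inverse Gram matrix. *)
Lemma coord_le_ipnorm :
  exists2 c, 0 <= c & forall (u : 'rV[R]_n) i, `|u 0 i| <= c * ipnorm ip u.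
Proof.
pose G := \matrix_(i, j) ip ('e_i : 'rV[R]_n) 'e_j.
have uG u j : (u *m G) 0 j = ip u 'e_j.
  by rewrite mxE ip_expand_l; apply: eq_bigr => k _; rewrite mxE.
have G_unit : G \in unitmx.
  rewrite -row_free_unit; apply: inj_row_free => v vG.
  have [_ _ _ def] := ipP; apply: def; rewrite ip_expand_r.
  by apply: big1 => k _; rewrite -uG vG mxE mulr0.
pose y k := \sum_j invmx G j k *: ('e_j : 'rV[R]_n).
have coordE (u : 'rV[R]_n) k : u 0 k = ip u (y k).
  rewrite -{1}(mulmxK G_unit u) mxE ip_sumr; apply: eq_bigr => j _.
  by rewrite ipZr uG mulrC.
exists (\sum_k ipnorm ip (y k)); first by rewrite sumr_ge0 // => k _; apply: ipnorm_ge0.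
move=> u k; rewrite coordE; apply: le_trans (ip_norm_le _ _) _.
rewrite mulrC ler_wpM2r ?ipnorm_ge0 //.
by apply: ler_sum_term => i; apply: ipnorm_ge0.
Qed.

Lemma ipnorm_le_coord (u : 'rV[R]_n) r : (forall i, `|u 0 i| <= r) ->
  ipnorm ip u <= r * \sum_i ipnorm ip ('e_i : 'rV[R]_n).
Proof.
move=> ur; rewrite {1}(row_sum_delta u) mulr_sumr.
apply: le_trans (ipnorm_sum _) (ler_sum _ _) => i _.
by rewrite ipnormZ ler_wpM2r ?ipnorm_ge0.
Qed.

(* The operator norm bounds A on the unit ball; the supremum defining it is
   finite by norm equivalence. *)
Lemma opnorm_ub (A : 'M[R]_n) (v : 'rV[R]_n) :
  ipnorm ip v <= 1 -> ipnorm ip (v *m A) <= opnorm ip A.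
Proof.
move=> v1; apply: sup_upper_bound; last by exists v.
have [c c0 coord_le] := coord_le_ipnorm.
split; first by exists (ipnorm ip (0 *m A)), 0; rewrite //= ipnorm0.
exists (\sum_i c * ipnorm ip ('e_i *m A)) => _ [w w1 <-].
rewrite {1}(row_sum_delta w) mulmx_suml.
apply: le_trans (ipnorm_sum _) (ler_sum _ _) => i _.
rewrite -scalemxAl ipnormZ ler_wpM2r ?ipnorm_ge0 //.
by apply: le_trans (coord_le _ _) _; rewrite -[leRHS]mulr1 ler_wpM2l.
Qed.

Lemma opnorm_bound (A : 'M[R]_n) (u : 'rV[R]_n) :
  ipnorm ip (u *m A) <= opnorm ip A * ipnorm ip u.
Proof.
have [->|un0] := eqVneq u 0; first by rewrite mul0mx ipnorm0 mulr0.
have u_gt0 : 0 < ipnorm ip u.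
  by rewrite lt_def ipnorm_ge0 andbT; apply: contra_neq un0; apply: ipnorm_eq0.
have := @opnorm_ub A ((ipnorm ip u)^-1 *: u).
rewrite -scalemxAl !ipnormZ ger0_norm ?invr_ge0 ?ipnorm_ge0 //.
rewrite mulVf ?gt_eqF // lexx => /(_ isT).
by rewrite -(@ler_pM2r _ (ipnorm ip u)) // mulrAC mulVf ?gt_eqF // mul1r.
Qed.

Lemma ip_eq0_of_min_norm v w :
  (forall t, ipnorm ip v <= ipnorm ip (v + t *: w)) -> ip v w = 0.
Proof.
have [_ _ ge0 _] := ipP.
move=> vmin; pose a := ip v w; pose q := ip w w; pose t := - a / (q + 1).
have q0 : 0 <= q by apply: ge0.
have aE : a = - (t * (q + 1)) by rewrite /t; field; rewrite gt_eqF // ltr_wpDl.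
have := vmin t.
rewrite -(@ler_pXn2r _ 2) ?nnegrE ?ipnorm_ge0 // !ipnorm_sq.
rewrite ipDl !ipDr !ipZl !ipZr (ipC w v) -/a -/q aE => H.
have t2_le0 : t ^+ 2 * (q + 2) <= 0 by nra.
have t0 : t = 0.
  apply/eqP; rewrite -sqrf_eq0 eq_le sqr_ge0 andbT.
  by move: t2_le0; rewrite pmulr_lle0 // ltr_wpDl.
by move: aE; rewrite t0 mul0r oppr0.
Qed.

End InnerProductGeometry.

Local Open Scope classical_set_scope.

(* Bolzano-Weierstrass in pigeonhole form: a coordinatewise bounded sequence
   of row vectors has two terms, with increasing indices, that are rho-close. *)
Lemma bounded_seq_close_pair (R : realType) n (y : nat -> 'rV[R]_n) r rho :
  0 < rho -> (forall j i, `|y j 0 i| <= r) ->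
  exists j0 j1, (j0 < j1)%N /\ forall i, `|y j0 0 i - y j1 0 i| < rho.
Proof.
move=> rho0 ybd; have rho2 : 0 < rho / 2 by rewrite divr_gt0.
pose S := [set v : 'rV[R]_n | forall i, `[- r, r] (v 0 i)].
have S_compact : compact S.
  by apply: (@rV_compact _ _ (fun=> `[- r, r]%classic)) => i; apply: segment_compact.
have yS : (y @ \oo) S.
  by exists 0%N => // j _ i /=; rewrite in_itv /= -ler_norml.
have [p [_ p_cluster]] := S_compact _ _ yS.
have near_p N : exists2 j, (N <= j)%N & ball p (rho / 2) (y j).
  have tail : (y @ \oo) [set y j | j in [set j | (N <= j)%N]].
    by exists N => // j /= Nj; exists j.
  have [_ [[j Nj <-] pj]] := p_cluster _ _ tail (nbhsx_ballx p (rho / 2) rho2).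
  by exists j.
have [j0 _ [_ b0]] := near_p 0%N.
have [j1 j01 [_ b1]] := near_p j0.+1.
exists j0, j1; split => // i.
have := b0 0 i; have := b1 0 i; rewrite /ball /= => h1 h0.
rewrite -[y j0 0 i - y j1 0 i](subrKA (p 0 i)).
by apply: le_lt_trans (ler_normD _ _) _; rewrite distrC in h0; lra.
Qed.

Local Close Scope classical_set_scope.

Section ApproximateIdentity.
Variables (R : realType) (n : nat) (ip : 'rV[R]_n -> 'rV[R]_n -> R).
Variables (g : R -> 'M[R]_n) (f : R -> R).
Hypothesis ipP : is_inner_product ip.
Hypothesis g_semigroup : forall x y, 0 <= x -> 0 <= y -> g (x + y) = g x *m g y.
Hypothesis g_bound : forall x, 0 <= x -> forall u,
  ipnorm ip (u *m g x) <= f x * ipnorm ip u.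
Hypothesis f_locbnd : locally_bounded0 f.

(* A vector v = z g(b) in the range of g(b) is moved arbitrarily little by
   some g(h) with 0 < h < b.  This replaces strong continuity of g. *)
Lemma approximate_identity (v z : 'rV[R]_n) b eta :
  0 < b -> z *m g b = v -> 0 < eta ->
  exists2 h, 0 < h < b & ipnorm ip (v *m g h - v) <= eta.
Proof.
move=> b0 zv eta0.
have [M M_ub] := f_locbnd (ltW b0).
have f_le x : 0 <= x <= b -> f x <= M by move=> /M_ub; rewrite ler_norml => /andP[].
have M0 : 0 <= M by apply: le_trans (normr_ge0 _) (M_ub 0 _); rewrite lexx ltW.
have [c c0 coord_le] := coord_le_ipnorm ipP.
set K := \sum_i ipnorm ip ('e_i : 'rV[R]_n).
have K0 : 0 <= K by rewrite sumr_ge0 // => i _; apply: ipnorm_ge0.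
pose s (j : nat) := b / (j.+2)%:R.
have s_gt0 j : 0 < s j by rewrite divr_gt0.
have s_ltb j : s j < b by rewrite /s ltr_pdivrMr // ltr_pMr // ltr1n.
have s_decr j0 j1 : (j0 < j1)%N -> s j1 < s j0.
  by move=> lt; rewrite /s ltr_pM2l // ltf_pV2 ?posrE ?ltr0n // ltr_nat ltnS.
have s_in j : 0 <= s j <= b by rewrite !ltW.
(* the orbit z g(s j) is bounded, hence has two close terms *)
pose y j := z *m g (s j).
have y_bnd j i : `|y j 0 i| <= c * (M * ipnorm ip z).
  apply: le_trans (coord_le _ _) (ler_wpM2l c0 _).
  apply: le_trans (g_bound (ltW (s_gt0 j)) z) _.
  by rewrite ler_wpM2r ?ipnorm_ge0 ?f_le.
pose rho := eta / (M * K + 1).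
have MK1 : 0 < M * K + 1 by rewrite ltr_wpDl // mulr_ge0.
have [j0 [j1 [j01 y_close]]] := bounded_seq_close_pair (divr_gt0 eta0 MK1) y_bnd.
set h := s j0 - s j1.
have h_gt0 : 0 < h by rewrite subr_gt0 s_decr.
have h_ltb : h < b by have := s_ltb j0; have := s_gt0 j1; rewrite /h; lra.
exists h; first by rewrite h_gt0 h_ltb.
have b_s1 : 0 <= b - s j1 by rewrite subr_ge0 ltW.
have diffE : v *m g h - v = (y j0 - y j1) *m g (b - s j1).
  rewrite mulmxBl /y -!mulmxA -!g_semigroup ?(ltW (s_gt0 _)) //.
  rewrite -zv -mulmxA -g_semigroup ?ltW //.
  by congr (_ *m g _ - _ *m g _); rewrite /h; ring.
rewrite diffE; apply: le_trans (g_bound b_s1 _) _.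
apply: le_trans (_ : M * ipnorm ip (y j0 - y j1) <= _).
  by rewrite ler_wpM2r ?ipnorm_ge0 // f_le // b_s1 gerBl ltW.
apply: le_trans (ler_wpM2l M0 (ipnorm_le_coord ipP (r := rho) _)) _.
  by move=> i; have := y_close i; rewrite !mxE => /ltW.
rewrite -/K.
have -> : M * (rho * K) = eta * ((M * K) / (M * K + 1)).
  by rewrite /rho; field; rewrite gt_eqF.
apply: ler_piMr; first exact: ltW.
by rewrite ler_pdivrMr // mul1r lerDl.
Qed.

End ApproximateIdentity.

Lemma right_cont_one_bound (R : realType) (f : R -> R) :
  (f x @[x --> 0^'+] --> f 0)%classic -> f 0 = 1 ->
  forall eps, 0 < eps -> exists2 d, 0 < d & forall x, 0 < x < d -> f x <= 1 + eps.
Proof.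
move=> /cvgrPdist_lt f_cont f01 eps eps0.
have /nbhs_ballP[d d0 near0] := f_cont _ eps0.
exists d => // x /andP[x0 xd].
have := near0 x; rewrite /ball /= sub0r normrN gtr0_norm // => /(_ xd x0).
by rewrite f01 distrC => fx; have := ler_norm (f x - 1); lra.
Qed.

Lemma ipnorm_le_add_killed (R : realType) n (ip : 'rV[R]_n -> 'rV[R]_n -> R)
  (g : R -> 'M[R]_n) (v u : 'rV[R]_n) :
  is_inner_product ip -> is_semigroup g -> boundedness_assumption ip g ->
  (forall b, 0 < b -> exists z, z *m g b = v) ->
  (forall h, 0 < h -> u *m g h = 0) ->
  ipnorm ip v <= ipnorm ip (v + u).
Proof.
move=> ipP [_ g_semigroup] [f [f_locbnd f_cont f01 g_opnorm]] v_range u_killed.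
have g_bound x : 0 <= x -> forall w, ipnorm ip (w *m g x) <= f x * ipnorm ip w.
  move=> x0 w; apply: le_trans (opnorm_bound ipP _ _) _.
  by rewrite ler_wpM2r ?ipnorm_ge0 ?g_opnorm.
(* for e > 0 pick h with f(h) <= 1 + eps and |v g(h) - v| <= eps, where
   eps (|v + u| + 1) = e *)
apply/ler_addgt0Pr => e e0.
have vu0 : 0 <= ipnorm ip (v + u) by apply: ipnorm_ge0.
pose eps := e / (ipnorm ip (v + u) + 1).
have eps0 : 0 < eps by rewrite divr_gt0 // ltr_wpDl.
have [d d0 f_le] := right_cont_one_bound f_cont f01 eps0.
have b0 : 0 < d / 2 by rewrite divr_gt0.
have [z zv] := v_range _ b0.
have [h /andP[h0 hb] vh] := approximate_identity ipP g_semigroup g_bound f_locbnd b0 zv eps0.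
have fh : f h <= 1 + eps.
  by apply: f_le; rewrite h0 (lt_trans hb) // ltr_pdivrMr // ltr_pMr // ltr1n.
have vhE : v *m g h = (v + u) *m g h by rewrite mulmxDl u_killed ?addr0.
have vE : v = v *m g h - (v *m g h - v) by rewrite opprB addrC subrK.
rewrite {1}vE; apply: le_trans (ipnormD ipP _ _) _; rewrite ipnormN // {1}vhE.
apply: le_trans (lerD (g_bound h (ltW h0) _) vh) _.
have -> : e = eps * ipnorm ip (v + u) + eps.
  by rewrite /eps; field; rewrite gt_eqF // ltr_wpDl.
by move: fh => /(ler_wpM2r vu0); lra.
Qed.

Unset Implicit Arguments. Set Strict Implicit.
Theorem mainTheorem12 (R : realType) (n : nat)
  (ip : 'rV[R]_n -> 'rV[R]_n -> R) (g : R -> 'M[R]_n) (V1 V2 : 'M[R]_n) :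
  is_inner_product ip ->
  is_semigroup g ->
  boundedness_assumption ip g ->
  (V1 + V2 == (1%:M : 'M[R]_n))%MS ->
  (V1 :&: V2 == (0 : 'M[R]_n))%MS ->
  (forall x, 0 <= x -> stablemx V1 (g x)) ->
  (forall x, 0 <= x -> stablemx V2 (g x)) ->
  (forall x, 0 <= x ->
     (forall v : 'rV[R]_n, (v <= V1)%MS -> v *m g x = 0 -> v = 0) /\
     (forall w : 'rV[R]_n, (w <= V1)%MS ->
        exists2 v : 'rV[R]_n, (v <= V1)%MS & v *m g x = w)) ->
  (forall x, 0 < x -> forall v : 'rV[R]_n, (v <= V2)%MS -> v *m g x = 0) ->
  forall v w : 'rV[R]_n, (v <= V1)%MS -> (w <= V2)%MS -> ip v w = 0.
Proof.
move=> ipP g_semigroup g_bounded _ _ _ _ g_V1 g_V2 v w vV1 wV2.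
apply: (ip_eq0_of_min_norm ipP) => t.
apply: (ipnorm_le_add_killed ipP g_semigroup g_bounded) => [b b0|h h0].
- by have [_ /(_ v vV1) [z _ zv]] := g_V1 b (ltW b0); exists z.
- by rewrite g_V2 // scalemx_sub.
Qed.
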